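(* Let $G$ be Boidol's group and let $(O_{\rho_k,\lambda_k})_{k\in\mathbb{N}}$ be a properly converging sequence in $\Gamma_3\subset\mathfrak{g}^*/G$ (with $\rho_k\in\mathbb{R}$, $\lambda_k\neq0$) such that $\lim_{k\to\infty}\lambda_k=0$. Then: (1) the sequence $\omega_k:=\rho_k\lambda_k$ converges to some $\omega\in\mathbb{R}$; (2) if $\omega\neq0$, the limit set of the sequence is the two-point set $\{O_{\omega,-1,0},O_{-\omega,1,0}\}$; (3) if $\omega=0$, the limit set of the sequence is $\Gamma_1\cup\Gamma_0$.
   Context: Boidol's group $G$ is the simply connected Lie group with Lie algebra $\mathfrak{g}$ having basis $T,X,Y,Z$ and non-trivial brackets $[T,X]=-X$, $[T,Y]=Y$, $[X,Y]=Z$; concretely $G=\mathbb{R}^4$ with product $(t,x,y,z)\cdot(t',x',y',z')=(t+t',\,e^{t'}x+x',\,e^{-t'}y+y',\,z+z'+\tfrac12(e^{t'}xy'-e^{-t'}x'y))$. Write elements of $\mathfrak{g}^*$ as $aT^*+bX^*+cY^*+dZ^*$. The coadjoint orbits are exactly: for $\rho\in\mathbb{R},\lambda\neq0$, $O_{\rho,\lambda}=\{\frac{\rho\lambda+xy}{\lambda}T^*+xX^*+yY^*+\lambda Z^*: x,y\in\mathbb{R}\}$; for $(\alpha,\beta)\neq(0,0)$, $O_{\alpha,\beta,0}=\{uT^*+e^t\alpha X^*+e^{-t}\beta Y^*: t,u\in\mathbb{R}\}$; for $\tau\in\mathbb{R}$, the singletons $\{\tau T^*\}$. Let $\Gamma_3=\{O_{\rho,\lambda}:\lambda\neq0\}$,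 $\Gamma_1=\{O_{1,0,0},O_{-1,0,0},O_{0,1,0},O_{0,-1,0}\}$, $\Gamma_0=\{\{\tau T^*\}:\tau\in\mathbb{R}\}$. The orbit space $\mathfrak{g}^*/G$ has the quotient topology. The limit set of a sequence in $\mathfrak{g}^*/G$ is the set of all its limits; a sequence is properly converging if it has at least one limit and every subsequence has the same limit set as the whole sequence. *)

From Stdlib Require Import Reals.
Open Scope R_scope.

(* g^* identified with R^4: (a,b,c,d) stands for aT^* + bX^* + cY^* + dZ^*. *)
Definition gstar : Type := (R * R * R * R)%type.

Definition gpt (a b c d : R) : gstar := (a, b, c, d).

Definition gset := gstar -> Prop.

Definition open4 (U : gset) : Prop :=
  forall a b c d, U (gpt a b c d) ->
    exists eps, 0 < eps /\
      forall a' b' c' d', Rabs (a' - a) < eps -> Rabs (b' - b) < eps ->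
        Rabs (c' - c) < eps -> Rabs (d' - d) < eps -> U (gpt a' b' c' d').

Definition O3 (rho lambda : R) : gset :=
  fun p => exists x y, p = gpt ((rho * lambda + x * y) / lambda) x y lambda.

Definition O2 (alpha beta : R) : gset :=
  fun p => exists t u, p = gpt u (exp t * alpha) (exp (- t) * beta) 0.

Definition O0 (tau : R) : gset := fun p => p = gpt tau 0 0 0.

Definition Gamma3 (O : gset) : Prop :=
  exists rho lambda, lambda <> 0 /\ O = O3 rho lambda.
Definition Gamma1 (O : gset) : Prop :=
  O = O2 1 0 \/ O = O2 (-1) 0 \/ O = O2 0 1 \/ O = O2 0 (-1).
Definition Gamma0 (O : gset) : Prop := exists tau, O = O0 tau.

Definition is_orbit (O : gset) : Prop :=
  Gamma3 O \/ (exists alpha beta, (alpha <> 0 \/ beta <> 0) /\ O = O2 alpha beta)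
  \/ Gamma0 O.

(* Quotient topology: a set U of orbits is open iff its preimage under the
   quotient map g^* -> g^*/G (the union of the orbits in U) is open. *)
Definition qopen (U : gset -> Prop) : Prop :=
  open4 (fun p => exists O, is_orbit O /\ U O /\ O p).

Definition orbit_converges (s : nat -> gset) (O : gset) : Prop :=
  is_orbit O /\
  forall U : gset -> Prop, qopen U -> U O ->
    exists N, forall k, (N <= k)%nat -> U (s k).

Definition limit_set (s : nat -> gset) : gset -> Prop :=
  fun O => orbit_converges s O.

Definition properly_converging (s : nat -> gset) : Prop :=
  (exists O, limit_set s O) /\
  forall phi : nat -> nat, (forall n, (phi n < phi (S n))%nat) ->
    forall O, limit_set (fun n => s (phi n)) O <-> limit_set s O.

(* The functions [d] and [ad - bc] on g^* are continuous and constant on coadjoint orbits,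
   with values [lambda_k] and [rho_k lambda_k] on [O_{rho_k,lambda_k}]. So a limit of the
   sequence (one exists by proper convergence) makes [rho_k lambda_k] converge to some
   [omega] and lies in [d = 0] with [ad - bc = omega]: it is an [O_{alpha,beta,0}] with
   [alpha beta = -omega], or a point [tau T^*] if [omega = 0]; the rescaling
   [(alpha, beta) -> (e^s alpha, e^-s beta)] brings it to the listed normal forms.
   Conversely, each such orbit contains a limit in g^* of points of [O_{rho_k,lambda_k}],
   and as an orbit with [d <> 0] is determined by any of its points, the quotient topology
   turns this into convergence of the orbits. *)

From Stdlib Require Import Reals Lra Lia FunctionalExtensionality PropExtensionality.
From Coquelicot Require Import Coquelicot.
Open Scope R_scope.

Definition zcoord (p : gstar) : R := let '(_, _, _, d) := p in d.
Definition casimir (p : gstar) : R := let '(a, b, c, d) := p in a * d - b * c.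

Definition orbit_invariant (g : gstar -> R) : Prop :=
  forall O p q, is_orbit O -> O p -> O q -> g p = g q.

Lemma gpt_inj a b c d a' b' c' d' :
  gpt a b c d = gpt a' b' c' d' -> a = a' /\ b = b' /\ c = c' /\ d = d'.
Proof. intros H; injection H; auto. Qed.

Lemma O3_gpt r l a x y : l <> 0 -> a * l = r * l + x * y -> O3 r l (gpt a x y l).
Proof.
  intros Hl H. exists x, y. unfold gpt. repeat f_equal.
  apply (Rmult_eq_reg_r l); [rewrite H; field|]; assumption.
Qed.

Lemma O2_gpt al be : O2 al be (gpt 0 al be 0).
Proof. exists 0, 0. rewrite Ropp_0, exp_0, !Rmult_1_l. reflexivity. Qed.

Lemma invariants_O3 r l p : l <> 0 -> O3 r l p -> zcoord p = l /\ casimir p = r * l.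
Proof. intros Hl [x [y ->]]. split; simpl; [reflexivity | field; assumption]. Qed.

Lemma invariants_O2 al be p : O2 al be p -> zcoord p = 0 /\ casimir p = - (al * be).
Proof.
  intros [t [u ->]]. split; simpl; [reflexivity|].
  rewrite exp_Ropp. pose proof (exp_pos t). field. lra.
Qed.

Lemma invariants_O0 t p : O0 t p -> zcoord p = 0 /\ casimir p = 0.
Proof. intros ->. split; simpl; ring. Qed.

Lemma invariants_orbit O p q : is_orbit O -> O p -> O q ->
  zcoord p = zcoord q /\ casimir p = casimir q.
Proof.
  intros [[r [l [Hl ->]]] | [[al [be [_ ->]]] | [t ->]]] Hp Hq.
  - destruct (invariants_O3 _ _ _ Hl Hp), (invariants_O3 _ _ _ Hl Hq). split; congruence.
  - destruct (invariants_O2 _ _ _ Hp), (invariants_O2 _ _ _ Hq). split; congruence.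
  - destruct (invariants_O0 _ _ Hp), (invariants_O0 _ _ Hq). split; congruence.
Qed.

Lemma zcoord_orbit_invariant : orbit_invariant zcoord.
Proof. intros O p q HO Hp Hq. exact (proj1 (invariants_orbit O p q HO Hp Hq)). Qed.

Lemma casimir_orbit_invariant : orbit_invariant casimir.
Proof. intros O p q HO Hp Hq. exact (proj2 (invariants_orbit O p q HO Hp Hq)). Qed.

Lemma zcoord_continuous p : continuous zcoord p.
Proof.
  apply (continuous_ext snd); [intros [[[a b] c] d]; reflexivity | apply continuous_snd].
Qed.

Lemma casimir_continuous p : continuous casimir p.
Proof.
  apply (continuous_ext (fun p : gstar =>
    minus (mult (fst (fst (fst p))) (snd p)) (mult (snd (fst (fst p))) (snd (fst p))))).
  { intros [[[a b] c] d]. reflexivity. }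
  apply @continuous_minus; apply @continuous_mult;
    repeat first [apply continuous_fst | apply continuous_snd | apply continuous_comp].
Qed.

Lemma continuous_gpt_ball (g : gstar -> R) a b c d eps :
  continuous g (gpt a b c d) -> 0 < eps ->
  exists del, 0 < del /\
    forall a' b' c' d', Rabs (a' - a) < del -> Rabs (b' - b) < del ->
      Rabs (c' - c) < del -> Rabs (d' - d) < del ->
      Rabs (g (gpt a' b' c' d') - g (gpt a b c d)) < eps.
Proof.
  intros Hg Heps.
  destruct (Hg _ (locally_ball (g (gpt a b c d)) (mkposreal _ Heps))) as [del Hdel].
  exists del. split; [apply cond_pos|].
  intros a' b' c' d' Ha Hb Hc Hd. apply (Hdel (gpt a' b' c' d')). repeat split; assumption.
Qed.

Lemma orbit_through a b c d : exists O, is_orbit O /\ O (gpt a b c d).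
Proof.
  destruct (Req_dec d 0) as [-> | Hd].
  - destruct (Req_dec b 0) as [-> | Hb]; [destruct (Req_dec c 0) as [-> | Hc]|].
    + exists (O0 a). split; [right; right; exists a|]; reflexivity.
    + exists (O2 0 c). split; [right; left; exists 0, c; auto|].
      exists 0, a. rewrite Ropp_0, exp_0, !Rmult_1_l. reflexivity.
    + exists (O2 b c). split; [right; left; exists b, c; auto|].
      exists 0, a. rewrite Ropp_0, exp_0, !Rmult_1_l. reflexivity.
  - exists (O3 ((a * d - b * c) / d) d). split.
    + left. exists ((a * d - b * c) / d), d. auto.
    + apply O3_gpt; [|field]; assumption.
Qed.

Lemma orbit_nonempty O : is_orbit O -> exists p, O p.
Proof.
  intros [[r [l [Hl ->]]] | [[al [be [_ ->]]] | [t ->]]].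
  - exists (gpt ((r * l + 0 * 0) / l) 0 0 l). exists 0, 0. reflexivity.
  - exists (gpt 0 al be 0). apply O2_gpt.
  - exists (gpt t 0 0 0). reflexivity.
Qed.

Lemma orbit_eq_O3 O a b c d : is_orbit O -> O (gpt a b c d) -> d <> 0 ->
  O = O3 ((a * d - b * c) / d) d.
Proof.
  intros [[r [l [Hl ->]]] | [[al [be [_ ->]]] | [t ->]]] Hp Hd.
  - destruct Hp as [x [y Hp]]. apply gpt_inj in Hp as (-> & -> & -> & ->).
    f_equal. field. assumption.
  - destruct Hp as [t [u Hp]]. apply gpt_inj in Hp as (_ & _ & _ & ->). contradiction.
  - apply gpt_inj in Hp as (_ & _ & _ & ->). contradiction.
Qed.

(* As [g] is constant on orbits, the orbits meeting [g^-1 (g q - eps, g q + eps)] form an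
   open set of the quotient. *)
Lemma Un_cv_of_orbit_converges g s O q v :
  orbit_invariant g -> (forall p, continuous g p) ->
  orbit_converges s O -> O q -> (forall k p, s k p -> g p = v k) -> Un_cv v (g q).
Proof.
  intros Hinv Hcont [HO Hconv] Hq Hv eps Heps.
  set (U := fun O' : gset => exists p, O' p /\ Rabs (g p - g q) < eps).
  assert (HU : qopen U).
  { intros a b c d [O' [HO' [[p0 [Hp0 Hlt]] Hp]]].
    destruct (continuous_gpt_ball g a b c d (eps - Rabs (g p0 - g q)))
      as [del [Hdel Hball]]; [apply Hcont | lra|].
    exists del. split; [assumption|]. intros a' b' c' d' Ha Hb Hc Hd.
    destruct (orbit_through a' b' c' d') as [O'' [HO'' Hp'']].
    exists O''. split; [assumption|]. split; [|assumption].
    exists (gpt a' b' c' d'). split; [assumption|].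
    specialize (Hball a' b' c' d' Ha Hb Hc Hd).
    rewrite (Hinv O' _ _ HO' Hp Hp0) in Hball.
    unfold Rabs in *. repeat destruct Rcase_abs; lra. }
  destruct (Hconv U HU) as [N HN].
  { exists q. split; [assumption|]. rewrite Rminus_diag, Rabs_R0. assumption. }
  exists N. intros n Hn. destruct (HN n Hn) as [p [Hp Hlt]].
  unfold R_dist. rewrite <- (Hv n p Hp). assumption.
Qed.

Lemma orbit_converges_of_Un_cv (s : nat -> gset) O a b c d (xa xb xc xd : nat -> R) :
  is_orbit O -> O (gpt a b c d) ->
  Un_cv xa a -> Un_cv xb b -> Un_cv xc c -> Un_cv xd d ->
  (forall k, is_orbit (s k)) -> (forall k, s k (gpt (xa k) (xb k) (xc k) (xd k))) ->
  (forall k, xd k <> 0) -> orbit_converges s O.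
Proof.
  intros HO Hp Ca Cb Cc Cd Hs Hx Hxd. split; [assumption|]. intros U HU HUO.
  destruct (HU a b c d) as [eps [Heps Hball]]; [exists O; auto|].
  destruct (Ca eps Heps) as [N1 H1], (Cb eps Heps) as [N2 H2],
    (Cc eps Heps) as [N3 H3], (Cd eps Heps) as [N4 H4].
  exists (N1 + N2 + N3 + N4)%nat. intros k Hk.
  destruct (Hball (xa k) (xb k) (xc k) (xd k)) as [O' [HO' [HUO' HO'x]]];
    [apply H1 | apply H2 | apply H3 | apply H4 |]; try lia.
  rewrite (orbit_eq_O3 O' _ _ _ _ HO' HO'x (Hxd k)),
    <- (orbit_eq_O3 (s k) _ _ _ _ (Hs k) (Hx k) (Hxd k)) in HUO'.
  assumption.
Qed.

Lemma O2_rescale k al be : 0 < k -> O2 (k * al) (be / k) = O2 al be.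
Proof.
  intros Hk. apply functional_extensionality. intros p. apply propositional_extensionality.
  assert (Hexp : forall t, exp (t + ln k) = exp t * k /\ exp (- (t + ln k)) = exp (- t) / k).
  { intros t. rewrite Ropp_plus_distr, !exp_plus, (exp_Ropp (ln k)), exp_ln by assumption.
    split; reflexivity. }
  split; intros [t [u ->]].
  - exists (t + ln k), u. destruct (Hexp t) as [-> ->].
    replace (exp (- t) / k * be) with (exp (- t) * (be / k)) by (field; lra).
    rewrite Rmult_assoc. reflexivity.
  - exists (t - ln k), u. destruct (Hexp (t - ln k)) as [E1 E2].
    replace (t - ln k + ln k) with t in E1, E2 by ring.
    rewrite E1, E2.
    replace (exp (- (t - ln k)) * (be / k)) with (exp (- (t - ln k)) / k * be) by (field; lra).
    rewrite <- (Rmult_assoc _ k al). reflexivity.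
Qed.

Lemma O2_normal_form_l al be : al <> 0 ->
  O2 al be = O2 1 (al * be) \/ O2 al be = O2 (-1) (- (al * be)).
Proof.
  intros Hal. destruct (Rlt_or_le 0 al) as [Hpos | Hneg].
  - left. rewrite <- (O2_rescale (/ al) al be) by (apply Rinv_0_lt_compat; lra).
    f_equal; field; assumption.
  - right. rewrite <- (O2_rescale (- / al) al be)
      by (apply Ropp_0_gt_lt_contravar, Rinv_lt_0_compat; lra).
    f_equal; field; assumption.
Qed.

Lemma O2_normal_form_r al be : be <> 0 ->
  O2 al be = O2 (al * be) 1 \/ O2 al be = O2 (- (al * be)) (-1).
Proof.
  intros Hbe. destruct (Rlt_or_le 0 be) as [Hpos | Hneg].
  - left. rewrite <- (O2_rescale be al be) by assumption.
    f_equal; field; assumption.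
  - right. rewrite <- (O2_rescale (- be) al be) by lra.
    f_equal; field; assumption.
Qed.

Lemma Un_cv_const c : Un_cv (fun _ => c) c.
Proof.
  intros eps Heps. exists 0%nat. intros n _. unfold R_dist. rewrite Rminus_diag, Rabs_R0. assumption.
Qed.

Lemma Un_cv_scal c u l : Un_cv u l -> Un_cv (fun k => c * u k) (c * l).
Proof. apply CV_mult, Un_cv_const. Qed.

Lemma Un_cv_eq u l l' : Un_cv u l -> l = l' -> Un_cv u l'.
Proof. intros Hu <-. exact Hu. Qed.

(* Split [c k] as [x k * y k] with [|x k| = |y k| = sqrt |c k|]. *)
Lemma Un_cv_factor_0 c : Un_cv c 0 ->
  exists x y, Un_cv x 0 /\ Un_cv y 0 /\ forall k, x k * y k = c k.
Proof.
  intros Hc.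
  set (x := fun k => sqrt (Rabs (c k))).
  set (y := fun k => if Rle_dec 0 (c k) then x k else - x k).
  assert (Hx : Un_cv x 0).
  { apply (Un_cv_eq _ (sqrt (Rabs 0))); [|rewrite Rabs_R0, sqrt_0; reflexivity].
    apply (continuity_seq sqrt (fun k => Rabs (c k))); [|apply cv_cvabs, Hc].
    apply continuity_pt_sqrt, Rabs_pos. }
  exists x, y. split; [exact Hx|]. split.
  - intros eps Heps. destruct (Hx eps Heps) as [N HN]. exists N. intros n Hn.
    specialize (HN n Hn). unfold R_dist, y in *. destruct Rle_dec; [assumption|].
    rewrite Rminus_0_r, Rabs_Ropp. rewrite Rminus_0_r in HN. assumption.
  - intros k. unfold y, x. pose proof (sqrt_sqrt (Rabs (c k)) (Rabs_pos _)).
    destruct Rle_dec.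
    + rewrite Rabs_pos_eq in * by assumption. assumption.
    + rewrite Rabs_left in * by lra. lra.
Qed.

Section LimitsInGamma3.

Variables rho lambda : nat -> R.
Hypothesis lambda_neq0 : forall k, lambda k <> 0.
Hypothesis lambda_cv0 : Un_cv lambda 0.

Local Notation orbits := (fun k => O3 (rho k) (lambda k)).
Local Notation omegas := (fun k => rho k * lambda k).

Lemma orbits_is_orbit k : is_orbit (orbits k).
Proof. left. exists (rho k), (lambda k). auto. Qed.

Lemma limit_point_invariants O q : limit_set orbits O -> O q ->
  zcoord q = 0 /\ Un_cv omegas (casimir q).
Proof.
  intros HO Hq. split.
  - apply (UL_sequence lambda); [|exact lambda_cv0].
    apply (Un_cv_of_orbit_converges zcoord orbits O); auto using
      zcoord_orbit_invariant, zcoord_continuous.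
    intros k p Hp. exact (proj1 (invariants_O3 _ _ _ (lambda_neq0 k) Hp)).
  - apply (Un_cv_of_orbit_converges casimir orbits O); auto using
      casimir_orbit_invariant, casimir_continuous.
    intros k p Hp. exact (proj2 (invariants_O3 _ _ _ (lambda_neq0 k) Hp)).
Qed.

Lemma limit_set_cases omega O : Un_cv omegas omega -> limit_set orbits O ->
  (exists al be, (al <> 0 \/ be <> 0) /\ al * be = - omega /\ O = O2 al be) \/
  (omega = 0 /\ Gamma0 O).
Proof.
  intros Homega HO. destruct (orbit_nonempty O (proj1 HO)) as [q Hq].
  destruct (limit_point_invariants O q HO Hq) as [Hz Hcas].
  pose proof (UL_sequence _ _ _ Hcas Homega) as <-.
  destruct (proj1 HO) as [[r [l [Hl ->]]] | [[al [be [Hab ->]]] | [t ->]]].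
  - exfalso. apply Hl. rewrite <- Hz. symmetry. exact (proj1 (invariants_O3 _ _ _ Hl Hq)).
  - left. exists al, be. rewrite (proj2 (invariants_O2 _ _ _ Hq)). split; [|split]; auto; ring.
  - right. split; [exact (proj2 (invariants_O0 _ _ Hq)) | exists t; reflexivity].
Qed.

(* Points [(0, al, c_k, lambda_k)] (or [(0, c_k, be, lambda_k)]) of the orbits tend to
   [(0, al, be, 0)]. *)
Lemma O2_limit al be : (al <> 0 \/ be <> 0) -> Un_cv omegas (- (al * be)) ->
  limit_set orbits (O2 al be).
Proof.
  intros Hab Homega.
  assert (HO : is_orbit (O2 al be)) by (right; left; exists al, be; auto).
  destruct (Req_dec al 0) as [Hal | Hal].
  - assert (Hbe : be <> 0) by tauto.
    apply (orbit_converges_of_Un_cv _ _ 0 al be 0 (fun _ => 0)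
      (fun k => (- / be) * (rho k * lambda k)) (fun _ => be) lambda);
      auto using O2_gpt, Un_cv_const, orbits_is_orbit.
    + apply (Un_cv_eq _ _ _ (Un_cv_scal _ _ _ Homega)). field. assumption.
    + intros k. apply O3_gpt; [|field]; auto.
  - apply (orbit_converges_of_Un_cv _ _ 0 al be 0 (fun _ => 0) (fun _ => al)
      (fun k => (- / al) * (rho k * lambda k)) lambda);
      auto using O2_gpt, Un_cv_const, orbits_is_orbit.
    + apply (Un_cv_eq _ _ _ (Un_cv_scal _ _ _ Homega)). field. assumption.
    + intros k. apply O3_gpt; [|field]; auto.
Qed.

(* Points [(t, x_k, y_k, lambda_k)] with [x_k y_k = t lambda_k - omega_k -> 0]. *)
Lemma O0_limit t : Un_cv omegas 0 -> limit_set orbits (O0 t).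
Proof.
  intros Homega.
  assert (Hc : Un_cv (fun k => t * lambda k - rho k * lambda k) 0).
  { apply (Un_cv_eq _ (t * 0 - 0)); [|ring].
    apply CV_minus; [apply Un_cv_scal, lambda_cv0 | exact Homega]. }
  destruct (Un_cv_factor_0 _ Hc) as [x [y [Hx [Hy Hxy]]]].
  apply (orbit_converges_of_Un_cv _ _ t 0 0 0 (fun _ => t) x y lambda);
    auto using Un_cv_const, orbits_is_orbit.
  - right; right. exists t. reflexivity.
  - reflexivity.
  - intros k. apply O3_gpt; [apply lambda_neq0|]. rewrite Hxy. ring.
Qed.

Lemma limit_set_omega_neq0 omega : Un_cv omegas omega -> omega <> 0 ->
  forall O, limit_set orbits O <-> O = O2 omega (-1) \/ O = O2 (- omega) 1.
Proof.
  intros Homega Hneq O. split.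
  - intros HO.
    destruct (limit_set_cases omega O Homega HO) as [[al [be [_ [Hprod ->]]]] | [Heq _]];
      [|contradiction].
    assert (Hbe : be <> 0) by (intros ->; apply Hneq; lra).
    destruct (O2_normal_form_r al be Hbe) as [-> | ->];
      rewrite Hprod, ?Ropp_involutive; tauto.
  - intros [-> | ->]; apply O2_limit; auto;
      apply (Un_cv_eq _ _ _ Homega); ring.
Qed.

Lemma limit_set_omega_eq0 : Un_cv omegas 0 ->
  forall O, limit_set orbits O <-> Gamma1 O \/ Gamma0 O.
Proof.
  intros Homega O. split.
  - intros HO.
    destruct (limit_set_cases 0 O Homega HO) as [[al [be [Hab [Hprod ->]]]] | [_ H0]];
      [left | right; exact H0].
    rewrite Ropp_0 in Hprod. unfold Gamma1.
    destruct (Req_dec al 0) as [-> | Hal].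
    + assert (Hbe : be <> 0) by tauto.
      destruct (O2_normal_form_r 0 be Hbe) as [-> | ->];
        rewrite Rmult_0_l, ?Ropp_0; tauto.
    + destruct (O2_normal_form_l al be Hal) as [-> | ->];
        rewrite Hprod, ?Ropp_0; tauto.
  - intros [G1 | [t ->]]; [|apply O0_limit; exact Homega].
    destruct G1 as [-> | [-> | [-> | ->]]]; apply O2_limit; try lra;
      apply (Un_cv_eq _ _ _ Homega); ring.
Qed.

End LimitsInGamma3.

Theorem proposition2p3 (rho lambda : nat -> R) :
  (forall k, lambda k <> 0) ->
  properly_converging (fun k => O3 (rho k) (lambda k)) ->
  Un_cv lambda 0 ->
  exists omega : R,
    Un_cv (fun k => rho k * lambda k) omega /\
    (omega <> 0 ->
       forall O, limit_set (fun k => O3 (rho k) (lambda k)) O <->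
                 (O = O2 omega (-1) \/ O = O2 (- omega) 1)) /\
    (omega = 0 ->
       forall O, limit_set (fun k => O3 (rho k) (lambda k)) O <->
                 (Gamma1 O \/ Gamma0 O)).
Proof.
  intros Hneq0 [[O HO] _] Hcv0.
  destruct (orbit_nonempty O (proj1 HO)) as [q Hq].
  destruct (limit_point_invariants rho lambda Hneq0 Hcv0 O q HO Hq) as [_ Homega].
  exists (casimir q). split; [exact Homega|]. split.
  - apply limit_set_omega_neq0; assumption.
  - intros Heq. rewrite Heq in Homega. apply limit_set_omega_eq0; assumption.
Qed.
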